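(* Let $\mathbf{L}$ be a distributive lattice and $n\ge1$ an integer. A subset $F\subseteq\mathbf{L}$ is an $n$-filter if and only if it is an intersection of prime $n$-filters on $\mathbf{L}$ (the empty intersection being $\mathbf{L}$).
   Context: For a set $X$, $Y\subseteq_n X$ means $Y$ is a non-empty subset of $X$ with $|Y|\le n$. An $n$-filter on a lattice is an upset $F$ such that for every non-empty finite $X\subseteq F$: if $\bigwedge Y\in F$ for every $Y\subseteq_n X$ then $\bigwedge X\in F$. A prime $n$-filter is an $n$-filter $F$ such that $a\vee b\in F$ implies $a\in F$ or $b\in F$ (the empty set and $\mathbf{L}$ count as prime $n$-filters). *)

From mathcomp Require Import all_boot all_order.
Set Implicit Arguments. Unset Strict Implicit. Unset Printing Implicit Defensive.
Import Order.Theory.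
Local Open Scope order_scope.

(* Subsets of the lattice are predicates T -> Prop (the lattice may be infinite).
   A non-empty finite subset X is represented by a list [x :: s] (duplicates and
   order are irrelevant for membership and for the meet). *)
Section Defs.
Context {d : Order.disp_t} {T : latticeType d}.

Definition nemeet (x : T) (s : seq T) : T := foldr Order.meet x s.

Definition upset (F : T -> Prop) : Prop := forall a b : T, a <= b -> F a -> F b.

Definition nfilter (n : nat) (F : T -> Prop) : Prop :=
  upset F /\
  forall (x : T) (s : seq T),
    (forall z, z \in x :: s -> F z) ->
    (forall (y : T) (t : seq T),
        (forall z, z \in y :: t -> z \in x :: s) ->
        (size (undup (y :: t)) <= n)%N ->
        F (nemeet y t)) ->
    F (nemeet x s).

Definition prime_nfilter (n : nat) (F : T -> Prop) : Prop :=
  nfilter n F /\ forall a b : T, F (a `|` b) -> F a \/ F b.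

End Defs.

(* Intersections of n-filters are n-filters, so only the converse needs work:
   every n-filter F is the intersection of the prime n-filters containing it.
   Given a outside F, Zorn's lemma yields an ideal A containing a, disjoint
   from F and maximal for these properties; its complement G is a prime upset
   containing F and avoiding a.  By maximality every u outside A has some j in
   A with u \/ j in F.  If a finite X in G has all its meets of at most n
   elements in G, finitely many such witnesses combine into a single
   i in A with w \/ i in F for each of those small meets w.  By
   distributivity {u | u \/ i in F} is again an n-filter, so (meet X) \/ i is
   in F, hence outside A, and meet X is in G. *)
From mathcomp Require Import all_boot all_order.
From mathcomp Require Import boolp classical_sets.
Set Implicit Arguments. Unset Strict Implicit. Unset Printing Implicit Defensive.
Import Order.Theory.
Local Open Scope order_scope.

Fixpoint subseqs {T : Type} (l : seq T) : seq (seq T) :=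
  if l is x :: s then subseqs s ++ map (cons x) (subseqs s) else [:: [::]].

Section Subseqs.
Variable T : eqType.

Lemma filter_mem_subseqs (p : pred T) (l : seq T) : filter p l \in subseqs l.
Proof.
elim: l => [|x s IH] /=; first by rewrite inE.
rewrite mem_cat; case: (p x); last by rewrite IH.
by rewrite (mem_map (fun a b => _)) ?IH ?orbT // => a b [].
Qed.

Lemma mem_subseqs (l Z : seq T) : Z \in subseqs l -> {subset Z <= l}.
Proof.
elim: l Z => [|h t IH] Z /=; first by rewrite inE => /eqP ->.
rewrite mem_cat => /orP[/IH sZt z /sZt|/mapP[Z' /IH sZt ->] z]; rewrite !inE.
  by move->; rewrite orbT.
by case/orP=> [->//|/sZt->]; rewrite orbT.
Qed.

Lemma size_undup_eq (s1 s2 : seq T) : s1 =i s2 -> size (undup s1) = size (undup s2).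
Proof. by move=> /perm_undup /perm_size. Qed.

Lemma subset_map_pullback (U : eqType) (f : T -> U) (x0 : T) (X : seq T)
    (Y : seq U) :
  {subset Y <= map f X} ->
  exists Z, [/\ {subset Z <= X}, map f Z = Y & size (undup Z) <= size (undup Y)]%N.
Proof.
move=> sYX; pose g y := nth x0 X (index y (map f X)).
have index_lt y : y \in map f X -> (index y (map f X) < size X)%N.
  by rewrite -(size_map f) index_mem.
exists (map g Y); split.
- by move=> _ /mapP[y /sYX /index_lt y_lt ->]; exact: mem_nth.
- rewrite -[RHS]map_id -map_comp; apply/eq_in_map => y /sYX yX /=.
  by rewrite /g -(nth_map x0 (f x0)) ?index_lt ?nth_index.
- rewrite -(size_map g (undup Y)); apply: uniq_leq_size (undup_uniq _) _ => z.
  by rewrite mem_undup => /mapP[y yY ->]; rewrite map_f ?mem_undup.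
Qed.

End Subseqs.

Section Meets.
Context {d : Order.disp_t} {L : latticeType d}.

Lemma nemeet_le (x : L) (s : seq L) (z : L) : z \in x :: s -> nemeet x s <= z.
Proof.
rewrite /nemeet; elim: s z => [|y s IH] z /=; first by rewrite inE => /eqP ->.
rewrite !inE => /or3P[/eqP->|/eqP->|zs]; first 2 [exact: leIl].
- by apply: le_trans (leIr _ _) _; apply: IH; rewrite mem_head.
- by apply: le_trans (leIr _ _) _; apply: IH; rewrite inE zs orbT.
Qed.

Lemma le_nemeet (w x : L) (s : seq L) :
  (forall z, z \in x :: s -> w <= z) -> w <= nemeet x s.
Proof.
rewrite /nemeet; elim: s => [|y s IH] /= wle; first by rewrite wle ?mem_head.
rewrite lexI wle ?inE ?eqxx ?orbT //= IH // => z; rewrite inE => /orP[/eqP->|zs].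
  by rewrite wle ?mem_head.
by rewrite wle // !inE zs !orbT.
Qed.

Lemma eq_nemeet (x y : L) (s t : seq L) : x :: s =i y :: t -> nemeet x s = nemeet y t.
Proof.
by move=> E; apply/le_anti; rewrite !le_nemeet // => z zin; apply: nemeet_le;
  rewrite ?E // -E.
Qed.

Lemma nfilter_ext (n : nat) (F G : L -> Prop) :
  (forall a, F a <-> G a) -> nfilter n F -> nfilter n G.
Proof.
move=> FG [uF nF]; split=> [a b ab /FG /(uF _ _ ab) /FG //|x s Gs Gsmall].
apply/FG/nF => [z /Gs /FG //|y t sub sz]; exact/FG/Gsmall.
Qed.

Lemma nfilter_bigcap (n : nat) (P : (L -> Prop) -> Prop) :
  (forall G, P G -> nfilter n G) -> nfilter n (fun a => forall G, P G -> G a).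
Proof.
move=> PG; split=> [a b ab Fa G PG_G|x s Fs Fsmall G PG_G].
  by have [uG _] := PG G PG_G; exact: uG ab (Fa G PG_G).
have [_ nG] := PG G PG_G; apply: nG => [z /Fs|y t sub sz]; first exact.
exact: Fsmall.
Qed.

End Meets.

Section Distributive.
Context {d : Order.disp_t} {L : distrLatticeType d}.

Lemma nemeet_map_joinr (x i : L) (s : seq L) :
  nemeet (x `|` i) (map (fun z => z `|` i) s) = nemeet x s `|` i.
Proof. by elim: s => [|y s IH] //=; rewrite IH joinIl. Qed.

Lemma nfilter_joinr (n : nat) (F : L -> Prop) (i : L) :
  nfilter n F -> nfilter n (fun u => F (u `|` i)).
Proof.
move=> [uF nF]; split=> [a b ab|x s Fs Fsmall].
  by apply: uF; rewrite leU2.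
set f := fun z => z `|` i; rewrite -nemeet_map_joinr.
apply: (nF (f x) (map f s)); rewrite -/(map f (x :: s)).
  by move=> _ /mapP[z zs ->]; exact: Fs.
move=> y t sub sz; have [[|z zs] [sZ + szZ]] := subset_map_pullback x sub => //.
move=> [<- <-]; rewrite nemeet_map_joinr; apply: Fsmall => //.
exact: leq_trans szZ sz.
Qed.

End Distributive.

Section Ideals.
Context {d : Order.disp_t} {L : latticeType d}.

Definition ideal (A : L -> Prop) : Prop :=
  (forall u v, u <= v -> A v -> A u) /\ (forall u v, A u -> A v -> A (u `|` v)).

Lemma ideal_le (a : L) : ideal (fun z => z <= a).
Proof.
split=> [u v uv va|u v ua va]; first exact: le_trans uv va.
by rewrite leUx ua va.
Qed.

Lemma ideal_joinr (A : L -> Prop) (u : L) :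
  ideal A -> ideal (fun z => exists2 j, A j & z <= j `|` u).
Proof.
move=> [dA jA]; split=> [x y xy [j Aj yj]|x y [j1 Aj1 x1] [j2 Aj2 y2]].
  by exists j => //; exact: le_trans xy yj.
exists (j1 `|` j2); first exact: jA.
by rewrite leUx (le_trans x1) ?(le_trans y2) // leU2 ?leUl ?leUr.
Qed.

Lemma compl_ideal_upset (A : L -> Prop) : ideal A -> upset (fun z => ~ A z).
Proof. by move=> [dA _] u v uv nAu Av; apply: nAu; exact: dA uv Av. Qed.

Lemma compl_ideal_prime (A : L -> Prop) (a b : L) :
  ideal A -> ~ A (a `|` b) -> ~ A a \/ ~ A b.
Proof. by move=> [_ jA] nAab; rewrite -not_andE => -[Aa Ab]; exact/nAab/jA. Qed.

Lemma ideal_common_witness (F A : L -> Prop) (i0 : L) (ws : seq L) :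
  upset F -> ideal A -> A i0 ->
  (forall u, ~ A u -> exists2 j, A j & F (u `|` j)) ->
  (forall w, w \in ws -> ~ A w) ->
  exists2 i, A i & forall w, w \in ws -> F (w `|` i).
Proof.
move=> uF [_ jA] Ai0 witness; elim: ws => [|w ws IH] nAws; first by exists i0.
have [i Ai Fi] : exists2 i, A i & forall w, w \in ws -> F (w `|` i).
  by apply: IH => z zs; apply: nAws; rewrite inE zs orbT.
have [j Aj Fj] := witness w (nAws w (mem_head _ _)).
exists (i `|` j); first exact: jA.
move=> z; rewrite inE => /orP[/eqP->|zs].
  by apply: uF Fj; rewrite leU2 ?leUr.
by apply: uF (Fi z zs); rewrite leU2 ?leUl.
Qed.

(* The condition [forall z, I z -> I a] lets the empty ideal, the union of the
   empty chain, pass Zorn's lemma. *)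
Lemma maximal_ideal_avoiding (F : L -> Prop) (a : L) :
  upset F -> ~ F a ->
  exists A, [/\ ideal A, A a, forall z, A z -> ~ F z
              & forall u, ~ A u -> exists2 j, A j & F (u `|` j)].
Proof.
move=> uF Fa.
pose admissible (I : set L) :=
  [/\ ideal I, forall z, I z -> ~ F z & forall z, I z -> I a].
have [A [[idA AF Aa_of] maxA]] :
    exists A, admissible A /\ forall B, (A `<` B)%classic -> ~ admissible B.
  apply: Zorn_bigcup => C CA totC; split; first split.
  - move=> u v uv [I CI Iv]; exists I => //.
    by have [[dI _] _ _] := CA I CI; exact: dI uv Iv.
  - move=> u v [I1 CI1 I1u] [I2 CI2 I2v].
    have [[_ jI1] _ _] := CA I1 CI1; have [[_ jI2] _ _] := CA I2 CI2.
    have [S12|S21] := totC I1 I2 CI1 CI2.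
      by exists I2 => //; apply: jI2 => //; exact: S12.
    by exists I1 => //; apply: jI1 => //; exact: S21.
  - by move=> z [I CI Iz]; have [_ IF _] := CA I CI; exact: IF Iz.
  - by move=> z [I CI Iz]; exists I => //; have [_ _ Ia] := CA I CI; exact: Ia Iz.
have Aa : A a.
  apply: contrapT => nAa; apply: (maxA (fun z => z <= a)).
    by split=> [z /Aa_of|sub] //; apply: nAa; apply: sub.
  split=> [|z za Fz|//]; first exact: ideal_le.
  exact/Fa/(uF _ _ za Fz).
exists A; split=> // u nAu; apply: contrapT => no_witness.
apply: (maxA (fun z => exists2 j, A j & z <= j `|` u)).
  split=> [z Az|sub]; first by exists z; rewrite ?leUl.
  by apply: nAu; apply: sub; exists a; rewrite ?leUr.
split=> [|z [j Aj zj] Fz|_ _]; first exact: ideal_joinr.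
  by apply: no_witness; exists j => //; apply: uF Fz; rewrite joinC.
by exists a; rewrite ?leUl.
Qed.

End Ideals.

Section Separation.
Context {d : Order.disp_t} {L : distrLatticeType d}.

Lemma nfilter_compl_maximal_ideal (n : nat) (F A : L -> Prop) (i0 : L) :
  (1 <= n)%N -> nfilter n F -> ideal A -> A i0 -> (forall z, A z -> ~ F z) ->
  (forall u, ~ A u -> exists2 j, A j & F (u `|` j)) ->
  nfilter n (fun z => ~ A z).
Proof.
move=> n_gt0 nF idA Ai0 AF witness; split; first exact: compl_ideal_upset.
move=> x s Gs Gsmall Am.
pose ws := [seq nemeet (head x Z) (behead Z) | Z <- subseqs (x :: s) &
             (Z != [::]) && (size (undup Z) <= n)%N].
have [i Ai Fi] : exists2 i, A i & forall w, w \in ws -> F (w `|` i).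
  apply: ideal_common_witness nF.1 idA Ai0 witness _.
  move=> w /mapP[[|z zs]]; rewrite mem_filter ?eqxx //.
  by move=> /andP[/andP[_ sz] /mem_subseqs sub] ->; apply: Gsmall.
have Fsmall y t : {subset y :: t <= x :: s} -> (size (undup (y :: t)) <= n)%N ->
    F (nemeet y t `|` i).
  move=> sub sz; have ZS := filter_mem_subseqs (mem (y :: t)) (x :: s).
  have EZ : filter (mem (y :: t)) (x :: s) =i y :: t.
    by move=> z; rewrite mem_filter andb_idr //; exact: sub.
  case: (filter (mem (y :: t)) (x :: s)) ZS EZ => [_ /(_ y)|z zs ZS EZ]; first by rewrite mem_head.
  rewrite -(eq_nemeet EZ); apply: Fi; apply/mapP; exists (z :: zs) => //.
  by rewrite mem_filter ZS (size_undup_eq EZ) sz.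
have [_ nFi] := nfilter_joinr i nF.
apply: AF (proj2 idA _ _ Am Ai) (nFi x s _ Fsmall) => z zin.
by apply: (Fsmall z [::]) => // w; rewrite inE => /eqP->.
Qed.

Lemma prime_nfilter_separation (n : nat) (F : L -> Prop) (a : L) :
  (1 <= n)%N -> nfilter n F -> ~ F a ->
  exists2 G, prime_nfilter n G & (forall z, F z -> G z) /\ ~ G a.
Proof.
move=> n_gt0 nF Fa; have [A [idA Aa AF witness]] := maximal_ideal_avoiding nF.1 Fa.
exists (fun z => ~ A z); last by split=> [z Fz /AF|]; [exact|exact].
split; first exact: nfilter_compl_maximal_ideal n_gt0 nF idA Aa AF witness.
by move=> b c; exact: compl_ideal_prime.
Qed.

End Separation.

Theorem mainTheorem10 (d : Order.disp_t) (L : distrLatticeType d) (n : nat)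
  (F : L -> Prop) :
  (1 <= n)%N ->
  (nfilter n F <->
   exists P : (L -> Prop) -> Prop,
     (forall G, P G -> prime_nfilter n G) /\
     (forall a : L, F a <-> (forall G, P G -> G a))).
Proof.
move=> n_gt0; split=> [nF|[P [PG FP]]]; last first.
  apply: nfilter_ext (fun a => iff_sym (FP a)) _.
  by apply: nfilter_bigcap => G /PG [].
exists (fun G => prime_nfilter n G /\ forall z, F z -> G z); split=> [G []//|a].
split=> [Fa G [_ FG]|FG_a]; first exact: FG.
apply: contrapT => Fa; have [G pG [FG Ga]] := prime_nfilter_separation n_gt0 nF Fa.
exact: Ga (FG_a G (conj pG FG)).
Qed.
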